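(* Let $f$ satisfy conditions (1) and (2a) and let $a>0$. Then the series \[ a\,e^{-pr^2}\sum_{n=0}^\infty\frac{c_{2n}(p)\,p^{2n}}{(n!)^2}\,r^{2n} \] is absolutely and uniformly convergent for all $r\in[0,\infty)$ and $p\in[0,\infty)$.
   Context: $f:[0,\infty)\to\mathbb{R}$; $c_n=2\pi\int_0^\infty f(r)\,r^{n+1}dr$ and $c_n(p)=2\pi\int_0^\infty f(r)\,r^{n+1}e^{-pr^2}dr$. Condition (1): there is a constant $F$ with $0\le f(r)\le F$ for all $r\ge0$, $c_0$ exists and $c_0>0$. Condition (2a): $c_{2n}$ exists for all $n\in\mathbb{N}_0$ and $c_n^{1/n}=o(n)$ as $n\to\infty$. *)

From Stdlib Require Import Reals Arith.
From Coquelicot Require Import Coquelicot.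
Open Scope R_scope.

Definition c_integrand (f : R -> R) (n : nat) : R -> R :=
  fun r => 2 * PI * f r * r ^ (n + 1).

Definition c_exists (f : R -> R) (n : nat) : Prop :=
  ex_RInt_gen (c_integrand f n) (at_point 0) (Rbar_locally p_infty).

Definition c (f : R -> R) (n : nat) : R :=
  RInt_gen (c_integrand f n) (at_point 0) (Rbar_locally p_infty).

Definition cp (f : R -> R) (n : nat) (p : R) : R :=
  RInt_gen (fun r => 2 * PI * f r * r ^ (n + 1) * exp (- p * r ^ 2))
    (at_point 0) (Rbar_locally p_infty).

Definition cond1 (f : R -> R) : Prop :=
  (exists F : R, forall r, 0 <= r -> 0 <= f r <= F) /\
  c_exists f 0 /\ 0 < c f 0.

Definition cond2a (f : R -> R) : Prop :=
  (forall n : nat, c_exists f (2 * n)) /\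
  is_lim_seq (fun n : nat => Rpower (c f n) (/ INR n) / INR n) 0.

Definition term (f : R -> R) (a : R) (n : nat) (r p : R) : R :=
  a * exp (- p * r ^ 2) *
  (cp f (2 * n) p * p ^ (2 * n) / (INR (Factorial.fact n)) ^ 2 * r ^ (2 * n)).

Definition unif_series_cv (u : nat -> R -> R -> R) : Prop :=
  exists S : R -> R -> R, forall eps : R, 0 < eps ->
    exists N : nat, forall n : nat, (N <= n)%nat ->
      forall r p : R, 0 <= r -> 0 <= p ->
        Rabs (S r p - sum_n (fun k => u k r p) n) < eps.

(* Let [w_k(s) = poisson s k = e^(-s) s^k / k!], which sum to 1 over k,
   and [g(x) = 2 pi f(x) x]. Since [p^k c_(2k)(p) / k! = M_k(p)] with
   [M_k(p) = int_0^oo g(x) w_k(p x^2) dx], the k-th term equals [a w_k(p r^2) M_k(p)],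
   and it suffices to make the blocks [sum_(N <= k <= M)] of these terms small for large N,
   uniformly in r and p.
   For large p: [g(x) <= 2 pi F x] and [int_0^oo x w_k(p x^2) dx <= 1 / (2 p)] give
   [M_k(p) <= pi F / p], so a block is at most [a pi F / p].
   For [p <= P]: by [w_k(p r^2) <= 1] a block is at most
   [a int_0^oo g(x) sum_(N <= k <= M) w_k(p x^2) dx]; the integral over [[B, oo)] is
   small for B large, and on [[0, B]] the inner sum is bounded by a tail of the
   exponential series at [P B^2].
   At [p = 0] all terms with [k >= 1] vanish. *)

From Stdlib Require Import Reals Lra Lia Factorial ClassicalEpsilon Classical_Prop.
From Coquelicot Require Import Coquelicot.
Open Scope R_scope.

Lemma ex_RInt_uniform_limit (f : R -> R) (a b : R) : a <= b ->
  (forall eps, 0 < eps -> exists phi, ex_RInt phi a b /\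
     forall x, a <= x <= b -> Rabs (f x - phi x) <= eps) ->
  ex_RInt f a b.
Proof.
  intros Hab Happrox. apply ex_RInt_Reals_1. intros eps.
  set (e := eps / (2 * (b - a + 1))).
  assert (He : 0 < e) by (apply Rdiv_lt_0_compat; [apply cond_pos | lra]).
  destruct (constructive_indefinite_description _ (Happrox e He))
    as [phi [Hphi Hfphi]].
  assert (He2 : 0 < eps / 2) by (generalize (cond_pos eps); lra).
  destruct (ex_RInt_Reals_0 _ _ _ Hphi (mkposreal _ He2))
    as [step [psi [Hstep Hpsi]]].
  exists step.
  exists (mkStepFun (StepFun_P28 e psi (mkStepFun (StepFun_P4 a b 1)))).
  rewrite Rmin_left, Rmax_right in Hstep |- * by lra.
  split.
  - intros t Ht. simpl. unfold fct_cte.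
    specialize (Hfphi t Ht). specialize (Hstep t Ht).
    replace (f t - step t) with ((f t - phi t) + (phi t - step t)) by ring.
    eapply Rle_trans; [apply Rabs_triang | lra].
  - rewrite StepFun_P30, StepFun_P18. simpl in Hpsi.
    assert (Hsmall : e * (1 * (b - a)) <= eps / 2).
    { unfold e. apply Rmult_le_reg_r with (2 * (b - a + 1)); [lra |].
      field_simplify; [| lra].
      generalize (cond_pos eps); nra. }
    eapply Rle_lt_trans; [apply Rabs_triang |].
    rewrite (Rabs_right (e * _)) by (apply Rle_ge, Rmult_le_pos; lra).
    lra.
Qed.

Section MultContinuous.

Variables (g phi : R -> R) (a b G e d : R).
Hypothesis g_int : ex_RInt g a b.
Hypothesis g_bound : forall x, a <= x <= b -> Rabs (g x) <= G.
Hypothesis d_pos : 0 < d.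
Hypothesis phi_unif : forall x y, a <= x <= b -> a <= y <= b ->
  Rabs (x - y) <= d -> Rabs (phi x - phi y) <= e.

(* Induction on the number of pieces of length [d]: on the last piece [[c - d, c]]
   the approximant is [g * phi c]. *)
Lemma mult_step_approx (n : nat) (c : R) : a <= c <= b -> c - a <= INR n * d ->
  exists psi, ex_RInt psi a c /\
    forall x, a <= x <= c -> Rabs (g x * phi x - psi x) <= G * e.
Proof.
  revert c; induction n as [| n IH]; intros c Hc Hn.
  - assert (HG : 0 <= G) by (eapply Rle_trans; [apply Rabs_pos | apply (g_bound a); lra]).
    assert (He : 0 <= e).
    { eapply Rle_trans; [apply Rabs_pos | apply (phi_unif a a)];
        rewrite ?Rminus_eq_0, ?Rabs_R0; lra. }
    exists (fun x => g x * phi x). split.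
    + replace c with a by (simpl in Hn; lra). apply ex_RInt_point.
    + intros x _. rewrite Rminus_eq_0, Rabs_R0. now apply Rmult_le_pos.
  - set (c' := Rmax a (c - d)).
    assert (Hc' : a <= c' <= c) by (split; [apply Rmax_l | apply Rmax_lub; lra]).
    destruct (IH c') as [psi [Hpsi Happrox]].
    { lra. }
    { unfold c'; apply Rmax_case_strong; intros; rewrite S_INR in Hn.
      - rewrite Rminus_eq_0. apply Rmult_le_pos; [apply pos_INR | lra].
      - lra. }
    exists (fun x => if Rle_dec x c' then psi x else g x * phi c). split.
    + apply ex_RInt_Chasles with c'.
      * apply ex_RInt_ext with psi; [| exact Hpsi].
        intros x Hx. rewrite Rmin_left, Rmax_right in Hx by lra.
        destruct (Rle_dec x c'); [reflexivity | lra].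
      * apply ex_RInt_ext with (fun x => scal (phi c) (g x)).
        -- intros x Hx. rewrite Rmin_left, Rmax_right in Hx by lra.
           destruct (Rle_dec x c'); [lra |]. unfold scal; simpl; unfold mult; simpl; ring.
        -- apply (ex_RInt_scal g c' c (phi c)), (ex_RInt_Chasles_2 g a); [lra |].
           apply (ex_RInt_Chasles_1 g a c b); [lra | exact g_int].
    + intros x Hx. destruct (Rle_dec x c') as [Hxc' | Hxc'].
      * apply Happrox. lra.
      * rewrite <- Rmult_minus_distr_l, Rabs_mult.
        apply Rmult_le_compat; try apply Rabs_pos.
        -- apply g_bound. lra.
        -- apply phi_unif; try lra.
           generalize (Rmax_r a (c - d)); fold c'; intro.
           rewrite Rabs_left1; lra.
Qed.

End MultContinuous.

Lemma ex_RInt_mult_continuous (g phi : R -> R) (a b : R) : a <= b ->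
  ex_RInt g a b -> (forall x, a <= x <= b -> continuous phi x) ->
  ex_RInt (fun x => g x * phi x) a b.
Proof.
  intros Hab Hg Hphi.
  destruct (ex_RInt_ub g a b Hg) as [G HG].
  rewrite Rmin_left, Rmax_right in HG by lra.
  assert (HG0 : 0 <= G) by (eapply Rle_trans; [apply Rabs_pos | apply (HG a); lra]).
  assert (Hunif : uniform_continuity phi (fun x => a <= x <= b)).
  { apply Heine; [apply compact_P3 |].
    intros x Hx. apply continuity_pt_filterlim, Hphi, Hx. }
  apply ex_RInt_uniform_limit; [exact Hab |]. intros eps Heps.
  set (e := eps / (G + 1)).
  assert (He : 0 < e) by (apply Rdiv_lt_0_compat; lra).
  destruct (Hunif (mkposreal e He)) as [delta Hdelta]; simpl in Hdelta.
  set (d := delta / 2).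
  assert (Hd : 0 < d) by (unfold d; generalize (cond_pos delta); lra).
  destruct (nfloor_ex ((b - a) / d)) as [n [_ Hn]]; [apply Rdiv_le_0_compat; lra |].
  destruct (mult_step_approx g phi a b G e d Hg HG Hd) with (S n) b
    as [psi [Hpsi Happrox]].
  - intros x y Hx Hy Hxy. left. apply Hdelta; [exact Hx | exact Hy |].
    unfold d in Hxy. generalize (cond_pos delta); lra.
  - lra.
  - rewrite S_INR. apply Rmult_lt_compat_r with (r := d) in Hn; [| exact Hd].
    replace ((b - a) / d * d) with (b - a) in Hn by (field; lra). lra.
  - exists psi. split; [exact Hpsi |]. intros x Hx.
    eapply Rle_trans; [apply Happrox, Hx |].
    apply Rmult_le_reg_r with (G + 1); [lra |]. unfold e.
    field_simplify; nra.
Qed.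

Section ImproperIntegral.

Variables (h : R -> R) (a : R).

Lemma is_RInt_gen_RInt_near (l : R) :
  is_RInt_gen h (at_point a) (Rbar_locally p_infty) l ->
  forall eps, 0 < eps -> exists M, forall y, M < y ->
    ex_RInt h a y /\ Rabs (RInt h a y - l) < eps.
Proof.
  intros Hl eps Heps.
  destruct (Hl (fun z => Rabs (z - l) < eps)) as [P Q HP [M HM] Hall].
  { exists (mkposreal eps Heps). intros z Hz. exact Hz. }
  exists M. intros y Hy.
  destruct (Hall a y HP (HM y Hy)) as [z [Hz Hzl]].
  simpl in Hz. split; [now exists z |]. now rewrite (is_RInt_unique _ _ _ _ Hz).
Qed.

Lemma ex_RInt_of_is_RInt_gen (l b : R) :
  is_RInt_gen h (at_point a) (Rbar_locally p_infty) l -> a <= b -> ex_RInt h a b.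
Proof.
  intros Hl Hb.
  destruct (is_RInt_gen_RInt_near l Hl 1 Rlt_0_1) as [M HM].
  apply (ex_RInt_Chasles_1 h a b (Rmax M b + 1)).
  - generalize (Rmax_r M b); lra.
  - apply (HM (Rmax M b + 1)). generalize (Rmax_l M b); lra.
Qed.

Lemma is_RInt_gen_le_of_RInt_le (l K : R) :
  is_RInt_gen h (at_point a) (Rbar_locally p_infty) l ->
  (forall b, a <= b -> RInt h a b <= K) -> l <= K.
Proof.
  intros Hl HK. apply Rnot_lt_le. intros HlK.
  destruct (is_RInt_gen_RInt_near l Hl (l - K)) as [M HM]; [lra |].
  destruct (HM (Rmax M a + 1)) as [_ Hy]; [generalize (Rmax_l M a); lra |].
  assert (RInt h a (Rmax M a + 1) <= K) by (apply HK; generalize (Rmax_r M a); lra).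
  apply Rabs_def2 in Hy. lra.
Qed.

Lemma RInt_tail_small (l : R) :
  is_RInt_gen h (at_point a) (Rbar_locally p_infty) l ->
  forall eps, 0 < eps -> exists B, a <= B /\ forall b, B <= b -> RInt h B b <= eps.
Proof.
  intros Hl eps Heps.
  destruct (is_RInt_gen_RInt_near l Hl (eps / 2)) as [M HM]; [lra |].
  exists (Rmax M a + 1). split; [generalize (Rmax_r M a); lra |].
  intros b Hb.
  destruct (HM (Rmax M a + 1)) as [HB HlB]; [generalize (Rmax_l M a); lra |].
  destruct (HM b) as [Hb' Hlb]; [generalize (Rmax_l M a); lra |].
  assert (HBb : ex_RInt h (Rmax M a + 1) b).
  { apply (ex_RInt_Chasles_2 h a); [generalize (Rmax_r M a); lra | exact Hb']. }
  assert (Hsplit := RInt_Chasles h a _ b HB HBb).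
  simpl in Hsplit; unfold plus in Hsplit; simpl in Hsplit.
  apply Rabs_def2 in HlB. apply Rabs_def2 in Hlb. lra.
Qed.

Lemma RInt_nonneg_mono (b b' : R) :
  (forall x, a <= x -> 0 <= h x) -> ex_RInt h a b' -> a <= b <= b' ->
  RInt h a b <= RInt h a b'.
Proof.
  intros Hpos Hint Hb.
  assert (Hbb' : ex_RInt h b b') by (apply (ex_RInt_Chasles_2 h a); auto).
  assert (Hab : ex_RInt h a b) by (apply (ex_RInt_Chasles_1 h a b b'); auto).
  rewrite <- (RInt_Chasles h a b b' Hab Hbb'). simpl; unfold plus; simpl.
  assert (0 <= RInt h b b'); [| lra].
  apply RInt_ge_0; [lra | exact Hbb' |]. intros x Hx. apply Hpos. lra.
Qed.

(* The partial integrals increase to their supremum. *)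
Lemma ex_RInt_gen_nonneg_bounded (K : R) :
  (forall x, a <= x -> 0 <= h x) -> (forall b, a <= b -> ex_RInt h a b) ->
  (forall b, a <= b -> RInt h a b <= K) ->
  ex_RInt_gen h (at_point a) (Rbar_locally p_infty).
Proof.
  intros Hpos Hint HK.
  set (E := fun y => exists b, a <= b /\ y = RInt h a b).
  destruct (completeness E) as [l [Hub Hlub]].
  { exists K. intros y [b [Hb ->]]. auto. }
  { exists (RInt h a a), a. split; [lra | reflexivity]. }
  assert (Hcvg : forall eps, 0 < eps -> exists b0, a <= b0 /\
      forall b, b0 <= b -> Rabs (RInt h a b - l) < eps).
  { intros eps Heps.
    destruct (classic (exists b0, a <= b0 /\ l - eps < RInt h a b0))
      as [[b0 [Hb0 Hlt]] | Hnone].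
    - exists b0. split; [exact Hb0 |]. intros b Hb.
      assert (RInt h a b <= l) by (apply Hub; exists b; split; [lra | reflexivity]).
      assert (RInt h a b0 <= RInt h a b).
      { apply RInt_nonneg_mono; [exact Hpos | apply Hint; lra | lra]. }
      apply Rabs_def1; lra.
    - exfalso. assert (l <= l - eps); [| lra].
      apply Hlub. intros y [b [Hb ->]]. apply Rnot_lt_le. intros Hlt.
      apply Hnone. now exists b. }
  exists l. intros P [eps HP].
  destruct (Hcvg eps (cond_pos eps)) as [b0 [Hb0 Hb0l]].
  apply Filter_prod with (fun x => x = a) (fun y => b0 < y).
  - reflexivity.
  - now exists b0.
  - intros x y -> Hy. exists (RInt h a y). split.
    + apply (RInt_correct (V := R_CompleteNormedModule)), Hint. lra.
    + apply HP, Hb0l. lra.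
Qed.

End ImproperIntegral.

Lemma is_RInt_gen_ge0 (h : R -> R) (a l : R) :
  (forall x, a <= x -> 0 <= h x) ->
  is_RInt_gen h (at_point a) (Rbar_locally p_infty) l -> 0 <= l.
Proof.
  intros Hpos Hl.
  assert (Hint : forall b, a <= b -> ex_RInt h a b)
    by (intros b Hb; exact (ex_RInt_of_is_RInt_gen h a l b Hl Hb)).
  assert (Hopp : - l <= 0).
  { apply (is_RInt_gen_le_of_RInt_le (fun x => - h x) a).
    - exact (is_RInt_gen_opp (V := R_NormedModule) _ _ Hl).
    - intros b Hb. rewrite (RInt_opp (V := R_CompleteNormedModule)) by now apply Hint.
      assert (0 <= RInt h a b); [| unfold opp; simpl; lra].
      apply RInt_ge_0; [lra | now apply Hint |].
      intros x Hx. apply Hpos. lra. }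
  lra.
Qed.

Lemma is_RInt_gen_sum_n_m {Fa Fb : (R -> Prop) -> Prop} {FFa : Filter Fa}
  {FFb : Filter Fb} (h : nat -> R -> R) (l : nat -> R) (N M : nat) :
  (N <= M)%nat -> (forall k, is_RInt_gen (h k) Fa Fb (l k)) ->
  is_RInt_gen (fun x => sum_n_m (fun k => h k x) N M) Fa Fb (sum_n_m l N M).
Proof.
  intros HNM Hl. induction HNM as [| M HNM IH].
  - rewrite sum_n_n. apply (is_RInt_gen_ext (V := R_NormedModule) (h N)); [| apply Hl].
    apply filter_forall. intros ab x _. now rewrite sum_n_n.
  - rewrite sum_n_Sm by lia.
    apply (is_RInt_gen_ext (V := R_NormedModule)
             (fun x => plus (sum_n_m (fun k => h k x) N M) (h (S M) x))).
    + apply filter_forall. intros ab x _. rewrite sum_n_Sm by lia. reflexivity.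
    + apply (is_RInt_gen_plus (V := R_NormedModule)); [exact IH | apply Hl].
Qed.

Lemma RInt_le_split (h g : R -> R) (a B b T e : R) : a <= B -> a <= b ->
  (forall c, a <= c -> ex_RInt h a c) -> (forall c, a <= c -> ex_RInt g a c) ->
  (forall x, a <= x -> 0 <= h x <= g x) -> (forall x, a <= x <= B -> h x <= T * g x) ->
  (forall c, B <= c -> RInt g B c <= e) ->
  RInt h a b <= T * RInt g a B + e.
Proof.
  intros HaB Hab Hh Hg Hhg HhT Htail.
  assert (He : 0 <= e).
  { apply Rle_trans with (RInt g B B); [| apply Htail; lra].
    rewrite RInt_point. unfold zero; simpl; lra. }
  assert (Hhead : RInt h a B <= T * RInt g a B).
  { rewrite <- (RInt_scal (V := R_CompleteNormedModule)) by now apply Hg.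
    apply RInt_le; [exact HaB | now apply Hh | |].
    - apply (ex_RInt_scal (V := R_CompleteNormedModule)). now apply Hg.
    - intros x Hx. apply HhT. lra. }
  destruct (Rle_dec b B) as [HbB | HBb].
  - assert (RInt h a b <= RInt h a B); [| lra].
    apply RInt_nonneg_mono; [intros x Hx; apply Hhg, Hx | now apply Hh | lra].
  - assert (Hsplit := RInt_Chasles h a B b (Hh B HaB)
                        (ex_RInt_Chasles_2 h a B b ltac:(lra) (Hh b Hab))).
    simpl in Hsplit; unfold plus in Hsplit; simpl in Hsplit. rewrite <- Hsplit.
    assert (RInt h B b <= RInt g B b); [| generalize (Htail b ltac:(lra)); lra].
    apply RInt_le; [lra | apply (ex_RInt_Chasles_2 h a); [lra | now apply Hh] |
      apply (ex_RInt_Chasles_2 g a); [lra | now apply Hg] |].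
    intros x Hx. apply Hhg. lra.
Qed.

Lemma INR_fact_pos (k : nat) : 0 < INR (fact k).
Proof. apply lt_0_INR, lt_O_fact. Qed.

Lemma exp_opp_le1 (s : R) : 0 <= s -> exp (- s) <= 1.
Proof.
  intros Hs. rewrite exp_Ropp, <- Rinv_1.
  apply Rinv_le_contravar; [lra | generalize (exp_ineq1_le s); lra].
Qed.

Lemma sum_n_m_ge0 (u : nat -> R) (N M : nat) :
  (forall k, 0 <= u k) -> 0 <= sum_n_m u N M.
Proof.
  intros Hu. apply Rle_trans with (sum_n_m (fun _ => 0) N M).
  - rewrite sum_n_m_const. lra.
  - now apply sum_n_m_le.
Qed.

Lemma sum_n_m_le_sum_n (u : nat -> R) (N M : nat) :
  (forall k, 0 <= u k) -> sum_n_m u N M <= sum_n u M.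
Proof.
  intros Hu. unfold sum_n. destruct N as [| N]; [lra |].
  destruct (Compare_dec.le_lt_dec (S N) M) as [HNM | HMN].
  - rewrite (sum_n_m_Chasles u 0 N M) by lia. simpl; unfold plus; simpl.
    generalize (sum_n_m_ge0 u 0 N Hu). lra.
  - rewrite sum_n_m_zero by lia. now apply sum_n_m_ge0.
Qed.

Lemma is_series_exp (x : R) : is_series (fun n => x ^ n / INR (fact n)) (exp x).
Proof.
  refine (is_series_ext _ _ _ _ (is_exp_Reals x)). intros n.
  rewrite pow_n_pow. simpl; unfold scal, mult; simpl; unfold mult; simpl.
  unfold Rdiv. ring.
Qed.

Definition poisson (s : R) (k : nat) : R := exp (- s) * s ^ k / INR (fact k).

Lemma poisson_ge0 (s : R) (k : nat) : 0 <= s -> 0 <= poisson s k.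
Proof.
  intros Hs. apply Rdiv_le_0_compat; [| apply INR_fact_pos].
  apply Rmult_le_pos; [apply Rlt_le, exp_pos | now apply pow_le].
Qed.

Lemma sum_n_m_poisson_le1 (s : R) (N M : nat) : 0 <= s -> sum_n_m (poisson s) N M <= 1.
Proof.
  intros Hs. eapply Rle_trans; [apply sum_n_m_le_sum_n; intros; now apply poisson_ge0 |].
  assert (Hfactor : forall n, poisson s n = exp (- s) * (s ^ n / INR (fact n)))
    by (intros n; unfold poisson, Rdiv; ring).
  unfold sum_n. rewrite (sum_n_m_ext _ _ 0 M Hfactor).
  rewrite (sum_n_m_mult_l (K := R_Ring)). simpl; unfold mult; simpl.
  replace 1 with (exp (- s) * exp s) by (rewrite <- exp_plus, Rplus_opp_l; apply exp_0).
  apply Rmult_le_compat_l; [apply Rlt_le, exp_pos |].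
  apply (is_lim_seq_incr_compare (sum_n (fun n => s ^ n / INR (fact n)))).
  - apply is_series_exp.
  - intros n. rewrite sum_Sn, <- (Rplus_0_r (sum_n _ n)) at 1.
    apply Rplus_le_compat_l, Rdiv_le_0_compat; [now apply pow_le | apply INR_fact_pos].
Qed.

Lemma poisson_le_exp_term (s S : R) (k : nat) : 0 <= s <= S ->
  poisson s k <= S ^ k / INR (fact k).
Proof.
  intros Hs. unfold poisson, Rdiv. rewrite Rmult_assoc.
  rewrite <- (Rmult_1_l (S ^ k * / INR (fact k))).
  assert (Hinv : 0 < / INR (fact k)) by apply Rinv_0_lt_compat, INR_fact_pos.
  apply Rmult_le_compat; [apply Rlt_le, exp_pos | | now apply exp_opp_le1 |].
  - apply Rmult_le_pos; [apply pow_le |]; lra.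
  - apply Rmult_le_compat_r; [lra | apply pow_incr; lra].
Qed.

Lemma poisson_tail_uniform (S : R) : 0 <= S ->
  forall eps, 0 < eps -> exists N0, forall N M s, (N0 <= N)%nat -> 0 <= s <= S ->
    sum_n_m (poisson s) N M <= eps.
Proof.
  intros HS eps Heps.
  destruct (Cauchy_ex_series _ (ex_intro _ _ (is_series_exp S)) (mkposreal eps Heps))
    as [N0 HN0].
  exists N0. intros N M s HN Hs.
  destruct (Compare_dec.le_lt_dec N M) as [HNM | HMN].
  2: { rewrite sum_n_m_zero by lia. unfold zero; simpl; lra. }
  apply Rle_trans with (sum_n_m (fun k => S ^ k / INR (fact k)) N M).
  - apply sum_n_m_le. intros k. now apply poisson_le_exp_term.
  - apply Rlt_le, Rle_lt_trans with (2 := HN0 N M HN ltac:(lia)), Rle_abs.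
Qed.

Lemma is_derive_poisson (s : R) (k : nat) :
  is_derive (fun t => poisson t (S k)) s (poisson s k - poisson s (S k)).
Proof.
  unfold poisson. rewrite fact_simpl, mult_INR.
  auto_derive; [easy |].
  change (match k with 0%nat => 1 | S _ => INR k + 1 end) with (INR (S k)).
  rewrite S_INR. simpl. field.
  split; [apply Rgt_not_eq, INR_fact_pos | generalize (pos_INR k); lra].
Qed.

Lemma is_derive_poisson_cdf (s : R) (k : nat) :
  is_derive (fun t => sum_n (poisson t) k) s (- poisson s k).
Proof.
  induction k as [| k IH].
  - apply (is_derive_ext (fun t => exp (- t))).
    { intros t. rewrite sum_O. unfold poisson. simpl. field. }
    auto_derive; [easy |]. unfold poisson. simpl. field.
  - replace (- poisson s (S k))
      with (plus (- poisson s k) (poisson s k - poisson s (S k)))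
      by (unfold plus; simpl; ring).
    refine (is_derive_ext _ _ _ _ _
              (is_derive_plus _ _ s _ _ IH (is_derive_poisson s k))).
    intros t. now rewrite sum_Sn.
Qed.

Lemma continuous_poisson_gauss (p : R) (k : nat) (x : R) :
  continuous (fun y => poisson (p * y ^ 2) k) x.
Proof.
  apply (ex_derive_continuous (K := R_AbsRing) (V := R_NormedModule)).
  unfold poisson. auto_derive. easy.
Qed.

(* [- (sum_(j <= k) w_j(p x^2)) / (2 p)] is an antiderivative. *)
Lemma RInt_x_poisson_gauss_le (p b : R) (k : nat) : 0 < p -> 0 <= b ->
  RInt (fun x => x * poisson (p * x ^ 2) k) 0 b <= / (2 * p).
Proof.
  intros Hp Hb.
  set (cdf := fun x => sum_n (poisson (p * x ^ 2)) k).
  assert (Hderiv : forall x, is_derive (fun y => - / (2 * p) * cdf y) x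
                                       (x * poisson (p * x ^ 2) k)).
  { intros x.
    replace (x * poisson (p * x ^ 2) k)
      with (- / (2 * p) * scal (2 * p * x) (- poisson (p * x ^ 2) k))
      by (unfold scal; simpl; unfold mult; simpl; field; lra).
    apply is_derive_scal, (is_derive_comp (fun s => sum_n (poisson s) k)).
    - apply is_derive_poisson_cdf.
    - auto_derive; [easy | ring]. }
  assert (Hint := is_RInt_derive _ _ 0 b (fun x _ => Hderiv x)
                    (fun x _ => continuous_mult _ _ x (continuous_id x)
                                  (continuous_poisson_gauss p k x))).
  rewrite (is_RInt_unique _ _ _ _ Hint). unfold minus, plus, opp; simpl.
  assert (Hcdf0 : cdf 0 <= 1)
    by (apply sum_n_m_poisson_le1, Rmult_le_pos, pow_le; lra).
  assert (Hcdfb : 0 <= cdf b).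
  { apply sum_n_m_ge0. intros. apply poisson_ge0, Rmult_le_pos; [lra | apply pow_le; lra]. }
  apply Rmult_le_reg_l with (2 * p); [lra |].
  field_simplify; lra.
Qed.

Lemma unif_series_cv_of_uniform_cauchy (u : nat -> R -> R -> R) :
  (forall eps, 0 < eps -> exists N0, forall N M r p, (N0 <= N)%nat -> 0 <= r -> 0 <= p ->
     sum_n_m (fun k => Rabs (u k r p)) N M <= eps) ->
  unif_series_cv u.
Proof.
  intros Hcauchy.
  exists (fun r p => Series (fun k => u k r p)).
  intros eps Heps.
  destruct (Hcauchy (eps / 2)) as [N0 HN0]; [lra |].
  exists N0. intros n Hn r p Hr Hp.
  set (s := fun k => u k r p).
  assert (Hs : is_series s (Series s)).
  { apply Series_correct, (ex_series_Cauchy (V := R_CompleteNormedModule)). intros e.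
    destruct (Hcauchy (e / 2)) as [N1 HN1]; [generalize (cond_pos e); lra |].
    exists N1. intros i j Hi _.
    eapply Rle_lt_trans; [apply norm_sum_n_m |].
    eapply Rle_lt_trans; [apply (HN1 i j r p Hi Hr Hp) |].
    generalize (cond_pos e); lra. }
  assert (Htail : forall m, (n < m)%nat -> Rabs (sum_n s m - sum_n s n) <= eps / 2).
  { intros m Hm. rewrite <- (sum_n_m_sum_n (G := R_AbelianGroup)) by lia.
    eapply Rle_trans; [apply (norm_sum_n_m (K := R_AbsRing) (V := R_NormedModule)) |].
    apply HN0; auto. }
  assert (Hlim : is_lim_seq (fun m => Rabs (sum_n s m - sum_n s n))
                            (Rabs (Series s - sum_n s n))).
  { apply (is_lim_seq_abs _ (Series s - sum_n s n)), is_lim_seq_minus';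
      [exact Hs | apply is_lim_seq_const]. }
  assert (Rabs (Series s - sum_n s n) <= eps / 2); [| lra].
  refine (is_lim_seq_le_loc _ _ _ _ _ Hlim (is_lim_seq_const (eps / 2))).
  exists (S n). intros m Hm. apply Htail. lia.
Qed.

Lemma term_p0 (f : R -> R) (a r : R) (k : nat) : term f a (S k) r 0 = 0.
Proof. unfold term. rewrite pow_i by lia. unfold Rdiv. ring. Qed.

Section Moments.

Variables (f : R -> R) (F l0 : R).
Hypothesis f_bounds : forall x, 0 <= x -> 0 <= f x <= F.
Hypothesis c0_integral :
  is_RInt_gen (c_integrand f 0) (at_point 0) (Rbar_locally p_infty) l0.

Lemma PI_F_ge0 : 0 <= PI * F.
Proof.
  generalize PI_RGT_0 (f_bounds 0 (Rle_refl 0)). intros.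
  apply Rmult_le_pos; lra.
Qed.

Lemma c_integrand0_bounds (x : R) : 0 <= x ->
  0 <= c_integrand f 0 x <= 2 * PI * F * x.
Proof.
  intros Hx. unfold c_integrand. simpl. rewrite Rmult_1_r.
  destruct (f_bounds x Hx) as [Hf0 HfF]. assert (HPI := PI_RGT_0). split.
  - apply Rmult_le_pos; [apply Rmult_le_pos |]; lra.
  - apply Rmult_le_compat_r; [| apply Rmult_le_compat_l]; lra.
Qed.

Definition moment_integrand (p : R) (k : nat) (x : R) : R :=
  c_integrand f 0 x * poisson (p * x ^ 2) k.

Definition moment (p : R) (k : nat) : R :=
  RInt_gen (moment_integrand p k) (at_point 0) (Rbar_locally p_infty).

Lemma moment_integrand_ge0 (p : R) (k : nat) (x : R) : 0 <= p -> 0 <= x ->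
  0 <= moment_integrand p k x.
Proof.
  intros Hp Hx. apply Rmult_le_pos; [now apply c_integrand0_bounds |].
  apply poisson_ge0, Rmult_le_pos, pow_le; lra.
Qed.

Lemma ex_RInt_moment_integrand (p : R) (k : nat) (b : R) : 0 <= b ->
  ex_RInt (moment_integrand p k) 0 b.
Proof.
  intros Hb. apply ex_RInt_mult_continuous; [exact Hb | |].
  - exact (ex_RInt_of_is_RInt_gen _ _ _ _ c0_integral Hb).
  - intros x _. apply continuous_poisson_gauss.
Qed.

Lemma RInt_moment_integrand_le (p : R) (k : nat) (b : R) : 0 < p -> 0 <= b ->
  RInt (moment_integrand p k) 0 b <= PI * F / p.
Proof.
  intros Hp Hb.
  assert (Hcont : ex_RInt (fun x => x * poisson (p * x ^ 2) k) 0 b).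
  { apply (ex_RInt_continuous (V := R_CompleteNormedModule)). intros x _.
    exact (continuous_mult _ _ x (continuous_id x) (continuous_poisson_gauss p k x)). }
  apply Rle_trans with (RInt (fun x => 2 * PI * F * (x * poisson (p * x ^ 2) k)) 0 b).
  - apply RInt_le; [exact Hb | now apply ex_RInt_moment_integrand | |].
    + now apply (ex_RInt_scal (V := R_CompleteNormedModule)).
    + intros x Hx. unfold moment_integrand. rewrite <- Rmult_assoc.
      apply Rmult_le_compat_r; [apply poisson_ge0, Rmult_le_pos, pow_le; lra |].
      apply c_integrand0_bounds. lra.
  - rewrite (RInt_scal (V := R_CompleteNormedModule)) by exact Hcont.
    simpl; unfold mult; simpl.
    apply Rle_trans with (2 * PI * F * / (2 * p)).
    + apply Rmult_le_compat_l; [| now apply RInt_x_poisson_gauss_le].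
      generalize PI_F_ge0. lra.
    + right. field. lra.
Qed.

Lemma is_RInt_gen_moment (p : R) (k : nat) : 0 < p ->
  is_RInt_gen (moment_integrand p k) (at_point 0) (Rbar_locally p_infty) (moment p k).
Proof.
  intros Hp. apply (RInt_gen_correct (V := R_CompleteNormedModule)).
  apply (ex_RInt_gen_nonneg_bounded _ _ (PI * F / p)).
  - intros x Hx. apply moment_integrand_ge0; lra.
  - apply ex_RInt_moment_integrand.
  - intros b Hb. now apply RInt_moment_integrand_le.
Qed.

Lemma moment_bounds (p : R) (k : nat) : 0 < p -> 0 <= moment p k <= PI * F / p.
Proof.
  intros Hp. split.
  - apply (is_RInt_gen_ge0 (moment_integrand p k) 0); [| now apply is_RInt_gen_moment].
    intros x Hx. apply moment_integrand_ge0; lra.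
  - apply (is_RInt_gen_le_of_RInt_le (moment_integrand p k) 0);
      [now apply is_RInt_gen_moment |].
    intros b Hb. now apply RInt_moment_integrand_le.
Qed.

Lemma cp_moment (p : R) (k : nat) : 0 < p ->
  cp f (2 * k) p = INR (fact k) / p ^ k * moment p k.
Proof.
  intros Hp.
  assert (Hpointwise : forall x, INR (fact k) / p ^ k * moment_integrand p k x =
                         2 * PI * f x * x ^ (2 * k + 1) * exp (- p * x ^ 2)).
  { intros x. unfold moment_integrand, poisson, c_integrand.
    rewrite Rpow_mult_distr, <- pow_mult, (pow_add x (2 * k) 1), Ropp_mult_distr_l.
    change (0 + 1)%nat with 1%nat.
    field. split; [apply Rgt_not_eq, INR_fact_pos | apply pow_nonzero; lra]. }
  apply (is_RInt_gen_unique (V := R_CompleteNormedModule)).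
  apply (is_RInt_gen_ext (V := R_NormedModule)
           (fun x => scal (INR (fact k) / p ^ k) (moment_integrand p k x))).
  - apply filter_forall. intros ab x _. apply Hpointwise.
  - apply (is_RInt_gen_scal (V := R_NormedModule)), is_RInt_gen_moment, Hp.
Qed.

Lemma term_moment (a r p : R) (k : nat) : 0 < p ->
  term f a k r p = a * poisson (p * r ^ 2) k * moment p k.
Proof.
  intros Hp. unfold term, poisson. rewrite cp_moment by exact Hp.
  replace (p ^ (2 * k)) with (p ^ k * p ^ k) by (rewrite <- pow_add; f_equal; lia).
  rewrite Rpow_mult_distr, <- pow_mult, Ropp_mult_distr_l.
  field. split; [apply Rgt_not_eq, INR_fact_pos | apply pow_nonzero; lra].
Qed.

Lemma term_ge0 (a r p : R) (k : nat) : 0 < a -> 0 < p -> 0 <= term f a k r p.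
Proof.
  intros Ha Hp. rewrite term_moment by exact Hp.
  apply Rmult_le_pos; [apply Rmult_le_pos; [lra |] | now apply moment_bounds].
  apply poisson_ge0, Rmult_le_pos; [lra | apply pow2_ge_0].
Qed.

Lemma sum_term_le_large_p (a r p : R) (N M : nat) : 0 < a -> 0 < p ->
  sum_n_m (fun k => term f a k r p) N M <= a * PI * F / p.
Proof.
  intros Ha Hp.
  assert (Hs : 0 <= p * r ^ 2) by (apply Rmult_le_pos; [lra | apply pow2_ge_0]).
  apply Rle_trans with (sum_n_m (fun k => a * PI * F / p * poisson (p * r ^ 2) k) N M).
  - apply sum_n_m_le. intros k. rewrite term_moment by exact Hp.
    replace (a * PI * F / p * poisson (p * r ^ 2) k)
      with (a * poisson (p * r ^ 2) k * (PI * F / p)) by (field; lra).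
    apply Rmult_le_compat_l; [| now apply moment_bounds].
    apply Rmult_le_pos; [lra | now apply poisson_ge0].
  - rewrite (sum_n_m_mult_l (K := R_Ring)). simpl; unfold mult; simpl.
    rewrite <- (Rmult_1_r (a * PI * F / p)) at 2.
    apply Rmult_le_compat_l; [| now apply sum_n_m_poisson_le1].
    apply Rdiv_le_0_compat; [| exact Hp].
    rewrite Rmult_assoc. generalize PI_F_ge0. nra.
Qed.

Lemma sum_term_le_sum_moment (a r p : R) (N M : nat) : 0 < a -> 0 < p ->
  sum_n_m (fun k => term f a k r p) N M <= a * sum_n_m (moment p) N M.
Proof.
  intros Ha Hp. rewrite <- (sum_n_m_mult_l (K := R_Ring)).
  apply sum_n_m_le. intros k. rewrite term_moment by exact Hp.
  change (mult ?x ?y) with (x * y). rewrite <- (Rmult_1_r a) at 2.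
  apply Rmult_le_compat_r; [now apply moment_bounds |].
  apply Rmult_le_compat_l; [lra |].
  rewrite <- (sum_n_n (poisson (p * r ^ 2)) k).
  apply sum_n_m_poisson_le1, Rmult_le_pos; [lra | apply pow2_ge_0].
Qed.

Lemma sum_moment_le (p B T e : R) (N M : nat) : 0 < p -> 0 <= B -> (N <= M)%nat ->
  (forall x, 0 <= x <= B -> sum_n_m (poisson (p * x ^ 2)) N M <= T) ->
  (forall c, B <= c -> RInt (c_integrand f 0) B c <= e) ->
  sum_n_m (moment p) N M <= T * RInt (c_integrand f 0) 0 B + e.
Proof.
  intros Hp HB HNM HT Htail.
  set (weights := fun x => sum_n_m (poisson (p * x ^ 2)) N M).
  assert (Hsum : is_RInt_gen (fun x => c_integrand f 0 x * weights x)
                   (at_point 0) (Rbar_locally p_infty) (sum_n_m (moment p) N M)).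
  { apply (is_RInt_gen_ext (V := R_NormedModule)
             (fun x => sum_n_m (fun k => moment_integrand p k x) N M)).
    - apply filter_forall. intros ab x _. apply (sum_n_m_mult_l (K := R_Ring)).
    - apply is_RInt_gen_sum_n_m; [exact HNM |]. intros k. now apply is_RInt_gen_moment. }
  apply (is_RInt_gen_le_of_RInt_le _ 0 _ _ Hsum). intros b Hb.
  apply (RInt_le_split _ (c_integrand f 0)); [exact HB | exact Hb | | | | | exact Htail].
  - intros c Hc. exact (ex_RInt_of_is_RInt_gen _ _ _ _ Hsum Hc).
  - intros c Hc. exact (ex_RInt_of_is_RInt_gen _ _ _ _ c0_integral Hc).
  - intros x Hx. destruct (c_integrand0_bounds x Hx) as [Hg _].
    assert (Hw : 0 <= weights x <= 1).
    { assert (0 <= p * x ^ 2) by (apply Rmult_le_pos; [lra | apply pow2_ge_0]).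
      split; [apply sum_n_m_ge0; intros; now apply poisson_ge0 |
              now apply sum_n_m_poisson_le1]. }
    split; [now apply Rmult_le_pos |].
    rewrite <- (Rmult_1_r (c_integrand f 0 x)) at 2. apply Rmult_le_compat_l; lra.
  - intros x Hx. rewrite Rmult_comm. apply Rmult_le_compat_r; [| now apply HT].
    apply c_integrand0_bounds. lra.
Qed.

Lemma sum_term_small_bounded_p (a P eps : R) : 0 < a -> 0 <= P -> 0 < eps ->
  exists N0, forall N M r p, (N0 <= N <= M)%nat -> 0 < p <= P ->
    sum_n_m (fun k => term f a k r p) N M <= eps.
Proof.
  intros Ha HP Heps.
  destruct (RInt_tail_small _ _ _ c0_integral (eps / (2 * a))) as [B [HB Htail]].
  { apply Rdiv_lt_0_compat; lra. }
  set (GB := RInt (c_integrand f 0) 0 B).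
  assert (HGB : 0 <= GB).
  { apply RInt_ge_0; [exact HB | exact (ex_RInt_of_is_RInt_gen _ _ _ _ c0_integral HB) |].
    intros x Hx. apply c_integrand0_bounds. lra. }
  set (T := eps / (2 * a * (GB + 1))).
  assert (HTGB : T * GB <= eps / (2 * a)).
  { unfold T. replace (eps / (2 * a * (GB + 1)) * GB)
      with (eps / (2 * a) * (GB / (GB + 1))) by (field; lra).
    rewrite <- (Rmult_1_r (eps / (2 * a))) at 2.
    apply Rmult_le_compat_l; [apply Rlt_le, Rdiv_lt_0_compat; lra |].
    apply Rmult_le_reg_r with (GB + 1); [lra |].
    unfold Rdiv. rewrite Rmult_assoc, Rinv_l; lra. }
  destruct (poisson_tail_uniform (P * B ^ 2)) with T as [N0 HN0].
  { apply Rmult_le_pos; [lra | apply pow2_ge_0]. }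
  { apply Rdiv_lt_0_compat; [lra | nra]. }
  exists N0. intros N M r p HNM Hp.
  eapply Rle_trans; [apply sum_term_le_sum_moment; lra |].
  apply Rle_trans with (a * (T * GB + eps / (2 * a))).
  - apply Rmult_le_compat_l; [lra |].
    apply sum_moment_le; [lra | exact HB | lia | | exact Htail].
    intros x Hx. apply HN0; [lia |]. split.
    + apply Rmult_le_pos; [lra | apply pow2_ge_0].
    + apply Rmult_le_compat; [lra | apply pow2_ge_0 | lra | apply pow_incr; lra].
  - apply Rle_trans with (a * (eps / (2 * a) + eps / (2 * a))); [| right; field; lra].
    apply Rmult_le_compat_l; lra.
Qed.

Lemma sum_abs_term_uniformly_small (a : R) : 0 < a ->
  forall eps, 0 < eps -> exists N0, forall N M r p, (N0 <= N)%nat -> 0 <= r -> 0 <= p ->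
    sum_n_m (fun k => Rabs (term f a k r p)) N M <= eps.
Proof.
  intros Ha eps Heps.
  assert (HaPIF : 0 <= a * PI * F) by (rewrite Rmult_assoc; generalize PI_F_ge0; nra).
  set (P := a * PI * F / eps + 1).
  destruct (sum_term_small_bounded_p a P eps) as [N1 HN1]; [lra | | lra |].
  { generalize (Rdiv_le_0_compat _ _ HaPIF Heps). unfold P. lra. }
  exists (max N1 1). intros N M r p HN Hr Hp.
  destruct (Compare_dec.le_lt_dec N M) as [HNM | HMN].
  2: { rewrite sum_n_m_zero by lia. unfold zero; simpl; lra. }
  destruct (Rle_lt_or_eq_dec 0 p Hp) as [Hp0 | <-].
  2: { rewrite (sum_n_m_ext_loc _ (fun _ => 0)).
       - rewrite sum_n_m_const. lra.
       - intros k Hk. destruct k as [| k]; [lia |]. now rewrite term_p0, Rabs_R0. }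
  rewrite (sum_n_m_ext _ (fun k => term f a k r p))
    by (intros k; apply Rabs_right, Rle_ge, term_ge0; assumption).
  destruct (Rle_lt_dec P p) as [Hlarge | Hsmall].
  - eapply Rle_trans; [now apply sum_term_le_large_p |].
    apply Rmult_le_reg_r with p; [exact Hp0 |].
    unfold Rdiv; rewrite Rmult_assoc, Rinv_l, Rmult_1_r by lra.
    apply Rmult_le_compat_l with (r := eps) in Hlarge; [| lra].
    replace (eps * P) with (a * PI * F + eps) in Hlarge by (unfold P; field; lra).
    lra.
  - apply HN1; split; lia || lra.
Qed.

End Moments.

Theorem lemma6 (f : R -> R) (a : R) :
  cond1 f -> cond2a f -> 0 < a ->
  unif_series_cv (fun n r p => Rabs (term f a n r p)) /\
  unif_series_cv (term f a).
Proof.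
  intros [[F HF] [[l0 Hl0] _]] _ Ha.
  assert (Hsmall := sum_abs_term_uniformly_small f F l0 HF Hl0 a Ha).
  split; apply unif_series_cv_of_uniform_cauchy; [| exact Hsmall].
  intros eps Heps. destruct (Hsmall eps Heps) as [N0 HN0].
  exists N0. intros N M r p HN Hr Hp.
  rewrite (sum_n_m_ext _ (fun k => Rabs (term f a k r p)))
    by (intros; apply Rabs_Rabsolu).
  now apply HN0.
Qed.
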